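(* For every $\nu,c>0$, the function $$z\mapsto\frac{\left(H_{-\nu-c}(z)\right)^2}{H_{-\nu}(z)\,H_{-\nu-2c}(z)}$$ is decreasing on $\mathbb{R}$.
   Context: For $\nu>0$ and $z\in\mathbb{R}$, $H_{-\nu}(z)=\frac{1}{\Gamma(\nu)}\int_0^\infty e^{-t^2-2tz}t^{\nu-1}\,dt$ (Hermite function; equivalently $H_{-\nu}(z)=2^{-\nu/2}e^{z^2/2}D_{-\nu}(\sqrt2 z)$ with $D$ the parabolic cylinder function). *)

From Stdlib Require Import Reals.
From Coquelicot Require Import Coquelicot.
Open Scope R_scope.

Definition Gamma_fn (nu : R) : R :=
  RInt_gen (fun t : R => exp (- t) * Rpower t (nu - 1))
           (at_right 0) (Rbar_locally p_infty).

Definition hermite_neg (nu z : R) : R :=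
  / Gamma_fn nu *
  RInt_gen (fun t : R => exp (- t ^ 2 - 2 * t * z) * Rpower t (nu - 1))
           (at_right 0) (Rbar_locally p_infty).

From Stdlib Require Import Reals Lra.
From Coquelicot Require Import Coquelicot.
Open Scope R_scope.

(* Write [f_a(z) = int_0^oo e^(-t^2 - 2tz) t^(a-1) dt], so that [H_(-a) = f_a / Gamma(a)], and
   [x_a = f_(a+1) / f_a].  Differentiating under the integral sign gives [f_a' = -2 f_(a+1)],
   and an integration by parts gives [a f_a = 2 f_(a+2) + 2z f_(a+1)].  Hence
   [x_a' = -a + 2z x_a + 2 x_a^2], and [z^2 x_a x_(a+1) -> a (a+1) / 4] as [z -> +oo].
   With [q = nu + c] and [s = nu + 2c], the logarithmic derivative of
   [f_q^2 / (f_nu f_s)] is [-2 D] where [D = 2 x_q - x_nu - x_s].  The Riccati equations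
   give [D' = m D - (x_nu - x_s)^2] for an explicit [m], so [D exp (- int m)] is
   nonincreasing; since [D > 0] for large [z] (strict convexity of [a (a+1)]), [D > 0]
   everywhere. *)

Lemma exp_le_compat x y : x <= y -> exp x <= exp y.
Proof.
  intros [Hlt|Heq]; [left; now apply exp_increasing | now rewrite Heq; right].
Qed.

Lemma ln_le_sub_1 x : 0 < x -> ln x <= x - 1.
Proof. intros Hx. generalize (exp_ineq1_le (ln x)). rewrite exp_ln; lra. Qed.

Lemma Rpower_gt_0 x a : 0 < Rpower x a.
Proof. apply exp_pos. Qed.

Lemma Rpower_sub_1 t a : 0 < t -> Rpower t (a - 1) = Rpower t a / t.
Proof.
  intros Ht. replace a with (1 + (a - 1)) at 2 by ring.
  rewrite Rpower_plus, Rpower_1 by exact Ht. field. lra.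
Qed.

Lemma is_derive_Rpower a t : 0 < t -> is_derive (fun x => Rpower x a) t (a * Rpower t (a - 1)).
Proof. intros Ht. apply is_derive_Reals, derivable_pt_lim_power, Ht. Qed.

Lemma Rpower_mul_exp_le b t : 0 < b -> 0 < t -> Rpower t b * exp (- t) <= Rpower b b * exp (- b).
Proof.
  intros Hb Ht. unfold Rpower. rewrite <- !exp_plus. apply exp_le_compat.
  assert (Hl := ln_le_sub_1 (t / b) ltac:(apply Rdiv_lt_0_compat; lra)).
  rewrite ln_div in Hl by lra.
  apply (Rmult_le_compat_l b) in Hl; [|lra].
  replace (b * (t / b - 1)) with (t - b) in Hl by (field; lra). lra.
Qed.

Lemma Rbar_mult_pos_m_infty a : 0 < a -> Rbar_mult a m_infty = m_infty.
Proof. intros Ha. simpl. destruct Rle_dec as [H|H]; [destruct Rle_lt_or_eq_dec|]; easy || lra. Qed.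

Lemma Rbar_mult_pos_p_infty a : 0 < a -> Rbar_mult a p_infty = p_infty.
Proof. intros Ha. simpl. destruct Rle_dec as [H|H]; [destruct Rle_lt_or_eq_dec|]; easy || lra. Qed.

Lemma Rpower_at_right_0 a : 0 < a -> filterlim (fun t => Rpower t a) (at_right 0) (locally 0).
Proof.
  intros Ha. unfold Rpower.
  apply (filterlim_comp _ _ _ (fun t => a * ln t) exp _ (Rbar_locally m_infty)).
  - eapply filterlim_comp; [apply is_lim_ln_0|].
    rewrite <- (Rbar_mult_pos_m_infty a Ha) at 2. apply filterlim_Rbar_mult_l.
  - apply is_lim_exp_m.
Qed.

Lemma Rpower_at_infty a : 0 < a ->
  filterlim (fun t => Rpower t a) (Rbar_locally p_infty) (Rbar_locally p_infty).
Proof.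
  intros Ha. unfold Rpower.
  apply (filterlim_comp _ _ _ (fun t => a * ln t) exp _ (Rbar_locally p_infty)).
  - eapply filterlim_comp; [apply is_lim_ln_p|].
    rewrite <- (Rbar_mult_pos_p_infty a Ha) at 2. apply filterlim_Rbar_mult_l.
  - apply is_lim_exp_p.
Qed.

Lemma exp_sub_1_sub_le x : Rabs (exp x - 1 - x) <= x ^ 2 * exp (Rabs x).
Proof.
  assert (Hlow := exp_ineq1_le x).
  assert (Hup : exp x * (1 - x) <= 1).
  { assert (E : exp x * exp (- x) = 1) by now rewrite <- exp_plus, Rplus_opp_r, exp_0.
    rewrite <- E. apply Rmult_le_compat_l; [left; apply exp_pos|].
    generalize (exp_ineq1_le (- x)); lra. }
  rewrite Rabs_pos_eq by lra.
  destruct (Rle_lt_dec 0 x) as [Hx|Hx].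
  - rewrite Rabs_pos_eq by lra. nra.
  - rewrite Rabs_left by lra.
    assert (1 <= exp (- x)) by (rewrite <- exp_0; apply exp_le_compat; lra). nra.
Qed.

Lemma Rabs_sub_le_via l x y : Rabs (x - y) <= Rabs (x - l) + Rabs (y - l).
Proof.
  replace (x - y) with ((x - l) + (l - y)) by ring. rewrite (Rabs_minus_sym y).
  apply Rabs_triang.
Qed.

Lemma exp_two_ln_sub_ln_sub_ln u v w : 0 < u -> 0 < v -> 0 < w ->
  u ^ 2 / (v * w) = exp (2 * ln u - ln v - ln w).
Proof.
  intros Hu Hv Hw.
  replace (2 * ln u - ln v - ln w) with (ln u + ln u + - ln v + - ln w) by ring.
  rewrite !exp_plus, !exp_Ropp, !exp_ln by assumption. field. lra.
Qed.

Lemma is_derive_eq (f : R -> R) (x l l' : R) : is_derive f x l -> l = l' -> is_derive f x l'.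
Proof. now intros Hd <-. Qed.

Lemma is_derive_of_remainder_le (F : R -> R) z L M :
  (forall h, Rabs h <= 1 -> Rabs (F (z + h) - F z - h * L) <= M * h ^ 2) -> is_derive F z L.
Proof.
  intros Hrem. apply is_derive_Reals. intros eps Heps.
  assert (HM : 0 < Rabs M + 1) by (generalize (Rabs_pos M); lra).
  assert (Hd : 0 < Rmin 1 (eps / (Rabs M + 1)))
    by (apply Rmin_glb_lt; [lra | now apply Rdiv_lt_0_compat]).
  exists (mkposreal _ Hd). intros h Hh0 Hh. simpl in Hh.
  assert (Hh1 := Rle_trans _ _ _ (Rlt_le _ _ Hh) (Rmin_l _ _)).
  assert (Hheps := Rlt_le_trans _ _ _ Hh (Rmin_r _ _)).
  assert (Habs : 0 < Rabs h) by now apply Rabs_pos_lt.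
  replace ((F (z + h) - F z) / h - L) with ((F (z + h) - F z - h * L) / h) by (field; auto).
  rewrite Rabs_div by auto.
  apply (Rmult_lt_reg_r (Rabs h)); [lra|].
  unfold Rdiv. rewrite Rmult_assoc, Rinv_l, Rmult_1_r by lra.
  apply (Rle_lt_trans _ _ _ (Hrem h Hh1)). rewrite <- pow2_abs.
  assert (Hsmall : (Rabs M + 1) * Rabs h < eps).
  { apply (Rmult_lt_compat_l (Rabs M + 1)) in Hheps; [|lra].
    now replace ((Rabs M + 1) * (eps / (Rabs M + 1))) with eps in Hheps by (field; lra). }
  assert (M <= Rabs M) by apply Rle_abs.
  nra.
Qed.

Lemma is_derive_nonpos_antimonotone (f df : R -> R) :
  (forall z, is_derive f z (df z)) -> (forall z, df z <= 0) ->
  forall x y, x <= y -> f y <= f x.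
Proof.
  intros Hd Hneg x y [Hxy|Heq]; [|rewrite Heq; apply Rle_refl].
  destruct (MVT_cor2 f df x y Hxy) as (c & Hc & _).
  - intros c _. now apply is_derive_Reals.
  - specialize (Hneg c). nra.
Qed.

Lemma is_derive_neg_decreasing (f df : R -> R) :
  (forall z, is_derive f z (df z)) -> (forall z, df z < 0) ->
  forall x y, x < y -> f y < f x.
Proof.
  intros Hd Hneg x y Hxy.
  destruct (MVT_cor2 f df x y Hxy) as (c & Hc & _).
  - intros c _. now apply is_derive_Reals.
  - specialize (Hneg c). nra.
Qed.

(* Gronwall: [D exp (- M)] is nonincreasing, so [D z <= 0] would force [D Z <= 0] for all
   [Z >= z]. *)
Lemma pos_of_derive_le_mul (D dD M m : R -> R) :
  (forall z, is_derive D z (dD z)) -> (forall z, is_derive M z (m z)) ->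
  (forall z, dD z <= m z * D z) ->
  (forall z, exists Z, z <= Z /\ 0 < D Z) ->
  forall z, 0 < D z.
Proof.
  intros HD HM Hineq Hfar z.
  set (Phi := fun z => D z * exp (- M z)).
  assert (HPhi : forall z, is_derive Phi z ((dD z - m z * D z) * exp (- M z))).
  { intros w. eapply is_derive_eq.
    - apply (is_derive_mult D (fun z => exp (- M z))); [apply HD | | apply Rmult_comm].
      apply (is_derive_comp exp (fun z => - M z)); [apply is_derive_exp|].
      apply (is_derive_opp M), HM.
    - unfold plus, mult, scal, opp; simpl; unfold mult; simpl. ring. }
  destruct (Hfar z) as (Z & HzZ & HDZ).
  assert (Hle : Phi Z <= Phi z).
  { apply (is_derive_nonpos_antimonotone Phi _ HPhi); [|exact HzZ].
    intros w. assert (0 < exp (- M w)) by apply exp_pos. specialize (Hineq w). nra. }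
  unfold Phi in Hle. assert (0 < exp (- M z)) by apply exp_pos.
  assert (0 < exp (- M Z)) by apply exp_pos.
  destruct (Rlt_or_le 0 (D z)) as [Hpos|Hnpos]; [exact Hpos | nra].
Qed.

(** * Improper integrals on [(0, +oo)] *)

Local Notation at_infty := (Rbar_locally p_infty).

Lemma ball_Rabs x e y : ball x e y <-> Rabs (y - x) < e.
Proof. reflexivity. Qed.

Lemma eventually_near_0_and_infty d M : 0 < d ->
  filter_prod (at_right 0) at_infty (fun ab => 0 < fst ab < d /\ M < snd ab).
Proof.
  intros Hd. apply (Filter_prod _ _ _ (fun x => 0 < x < d) (fun y => M < y)).
  - exists (mkposreal d Hd). intros y Hy Hy0.
    assert (Hy' : Rabs (y - 0) < d) by exact Hy. apply Rabs_def2 in Hy'. lra.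
  - now exists M.
  - now split.
Qed.

Lemma eventually_pos :
  filter_prod (at_right 0) at_infty (fun ab => 0 < fst ab /\ 0 < snd ab).
Proof.
  eapply filter_imp; [|apply (eventually_near_0_and_infty 1 0 Rlt_0_1)].
  intros ab [[Hx _] Hy]. now split.
Qed.

Lemma is_RInt_gen_of_is_RInt (f : R -> R) (Fa Fb : (R -> Prop) -> Prop) {FFa : Filter Fa}
  {FFb : Filter Fb} (V : R * R -> R) l :
  filter_prod Fa Fb (fun ab => is_RInt f (fst ab) (snd ab) (V ab)) ->
  filterlim V (filter_prod Fa Fb) (locally l) ->
  is_RInt_gen f Fa Fb l.
Proof.
  intros HV Hlim P HP.
  assert (HPV : filter_prod Fa Fb (fun ab => P (V ab))) by exact (Hlim P HP).
  unfold filtermapi. eapply filter_imp; [|exact (filter_and _ _ HV HPV)].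
  intros ab [Hi HPab]. now exists (V ab).
Qed.

Lemma filterlim_RInt_of_is_RInt_gen (f : R -> R) (Fa Fb : (R -> Prop) -> Prop) {FFa : Filter Fa}
  {FFb : Filter Fb} l :
  is_RInt_gen f Fa Fb l ->
  filterlim (fun ab => RInt f (fst ab) (snd ab)) (filter_prod Fa Fb) (locally l).
Proof.
  intros Hl P HP.
  assert (HPl : filter_prod Fa Fb (fun ab => exists y, is_RInt f (fst ab) (snd ab) y /\ P y))
    by exact (Hl P HP).
  unfold filtermap. eapply filter_imp; [|exact HPl].
  intros ab (y & Hy & HPy). now rewrite (is_RInt_unique _ _ _ _ Hy).
Qed.

Lemma ex_RInt_of_continuous_pos (h : R -> R) x y :
  (forall t, 0 < t -> continuous h t) -> 0 < x -> 0 < y -> ex_RInt h x y.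
Proof.
  intros Hc Hx Hy. apply (ex_RInt_continuous (V := R_CompleteNormedModule)).
  intros z Hz. apply Hc. assert (0 < Rmin x y) by now apply Rmin_glb_lt. lra.
Qed.

Lemma is_RInt_gen_lin (f g : R -> R) (Fa Fb : (R -> Prop) -> Prop) {FFa : Filter Fa}
  {FFb : Filter Fb} lf lg cf cg :
  is_RInt_gen f Fa Fb lf -> is_RInt_gen g Fa Fb lg ->
  is_RInt_gen (fun t => cf * f t + cg * g t) Fa Fb (cf * lf + cg * lg).
Proof.
  intros Hf Hg.
  exact (is_RInt_gen_plus (V := R_NormedModule) _ _ _ _
           (is_RInt_gen_scal (V := R_NormedModule) _ cf _ Hf)
           (is_RInt_gen_scal (V := R_NormedModule) _ cg _ Hg)).
Qed.

Section Comparison_test.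

Variables h G P : R -> R.
Hypothesis h_cont : forall t, 0 < t -> continuous h t.
Hypothesis G_cont : forall t, 0 < t -> continuous G t.
Hypothesis P_derive : forall t, 0 < t -> is_derive P t (G t).
Hypothesis h_bound : forall t, 0 < t -> 0 <= h t <= G t.

Lemma RInt_le_primitive x y : 0 < x <= y -> 0 <= RInt h x y <= P y - P x.
Proof.
  intros Hxy.
  assert (HG : is_RInt G x y (P y - P x)).
  { apply (is_RInt_derive (V := R_CompleteNormedModule) P G); intros t Ht;
      rewrite Rmin_left, Rmax_right in Ht by lra; [apply P_derive | apply G_cont]; lra. }
  assert (Hh : ex_RInt h x y) by (apply ex_RInt_of_continuous_pos; auto; lra).
  split.
  - apply RInt_ge_0; [lra | exact Hh |]. intros t Ht. apply h_bound. lra.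
  - rewrite <- (is_RInt_unique _ _ _ _ HG).
    apply RInt_le; [lra | exact Hh | now exists (P y - P x) |]. intros t Ht. apply h_bound. lra.
Qed.

Lemma abs_RInt_le_primitive x y : 0 < x -> 0 < y -> Rabs (RInt h x y) <= Rabs (P y - P x).
Proof.
  intros Hx Hy. destruct (Rle_lt_dec x y) as [Hxy|Hxy].
  - destruct (RInt_le_primitive x y) as [H0 H1]; [lra|]. rewrite !Rabs_pos_eq; lra.
  - destruct (RInt_le_primitive y x) as [H0 H1]; [lra|].
    rewrite <- (opp_RInt_swap (V := R_CompleteNormedModule))
      by (apply ex_RInt_of_continuous_pos; auto; lra).
    change (Rabs (- RInt h y x) <= Rabs (P y - P x)).
    rewrite Rabs_Ropp, (Rabs_minus_sym (P y)), !Rabs_pos_eq; lra.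
Qed.

Lemma abs_RInt_sub_le_primitive u1 u2 v1 v2 : 0 < u1 -> 0 < u2 -> 0 < v1 -> 0 < v2 ->
  Rabs (RInt h v1 v2 - RInt h u1 u2) <= Rabs (P u1 - P v1) + Rabs (P v2 - P u2).
Proof.
  intros Hu1 Hu2 Hv1 Hv2.
  assert (Hex : forall x y, 0 < x -> 0 < y -> ex_RInt h x y)
    by (intros; now apply ex_RInt_of_continuous_pos).
  assert (E : RInt h v1 v2 - RInt h u1 u2 = RInt h v1 u1 + RInt h u2 v2).
  { rewrite <- (RInt_Chasles (V := R_CompleteNormedModule) h v1 u1 v2),
      <- (RInt_Chasles (V := R_CompleteNormedModule) h u1 u2 v2) by auto.
    change (RInt h v1 u1 + (RInt h u1 u2 + RInt h u2 v2) - RInt h u1 u2 =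
            RInt h v1 u1 + RInt h u2 v2). ring. }
  rewrite E. apply (Rle_trans _ _ _ (Rabs_triang _ _)).
  apply Rplus_le_compat; now apply abs_RInt_le_primitive.
Qed.

Lemma ex_RInt_gen_dominated la lb :
  filterlim P (at_right 0) (locally la) -> filterlim P at_infty (locally lb) ->
  ex_RInt_gen h (at_right 0) at_infty.
Proof.
  intros Hla Hlb.
  set (V := fun ab : R * R => RInt h (fst ab) (snd ab)).
  assert (Hcauchy : exists l, filterlim V (filter_prod (at_right 0) at_infty) (locally l)).
  { apply filterlim_locally_cauchy. intros eps.
    assert (Heps4 : 0 < eps / 4) by (generalize (cond_pos eps); lra).
    set (e := mkposreal _ Heps4).
    exists (fun ab => (0 < fst ab /\ 0 < snd ab) /\
                      (Rabs (P (fst ab) - la) < e /\ Rabs (P (snd ab) - lb) < e)).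
    split.
    - apply filter_and; [apply eventually_pos|].
      apply (Filter_prod _ _ _ (fun x => Rabs (P x - la) < e) (fun y => Rabs (P y - lb) < e));
        [apply (Hla (ball la e)) | apply (Hlb (ball lb e)) | ]; try apply locally_ball. now split.
    - intros [u1 u2] [v1 v2] [[Hu1 Hu2] [Pu1 Pu2]] [[Hv1 Hv2] [Pv1 Pv2]]. simpl in *.
      apply ball_Rabs. unfold V; simpl.
      apply (Rle_lt_trans _ _ _ (abs_RInt_sub_le_primitive u1 u2 v1 v2 Hu1 Hu2 Hv1 Hv2)).
      assert (Hl := Rabs_sub_le_via la (P u1) (P v1)).
      assert (Hr := Rabs_sub_le_via lb (P v2) (P u2)).
      lra. }
  destruct Hcauchy as [l Hl]. exists l.
  apply (is_RInt_gen_of_is_RInt h _ _ V l); [|exact Hl].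
  eapply filter_imp; [|apply eventually_pos]. intros [x y] [Hx Hy].
  apply (RInt_correct (V := R_CompleteNormedModule)). now apply ex_RInt_of_continuous_pos.
Qed.

End Comparison_test.

Lemma is_RInt_gen_pos (h : R -> R) l :
  (forall t, 0 < t -> continuous h t) -> (forall t, 0 < t -> 0 < h t) ->
  is_RInt_gen h (at_right 0) at_infty l -> 0 < l.
Proof.
  intros Hc Hpos Hl.
  assert (Hmid : 0 < RInt h (1 / 2) 1).
  { apply RInt_gt_0; [lra | intros; apply Hpos; lra | intros; apply Hc; lra]. }
  apply (Rlt_le_trans _ _ _ Hmid). change (Rbar_le (RInt h (1 / 2) 1) l).
  apply (filterlim_le (F := filter_prod (at_right 0) at_infty) (fun _ => RInt h (1 / 2) 1)
           (fun ab => RInt h (fst ab) (snd ab)));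
    [| apply filterlim_const | exact (filterlim_RInt_of_is_RInt_gen h _ _ l Hl)].
  eapply filter_imp; [|apply (eventually_near_0_and_infty (1 / 2) 1); lra].
  intros [x y] [Hx Hy]; simpl in *.
  assert (Hex : forall u v, 0 < u -> 0 < v -> ex_RInt h u v)
    by (intros; now apply ex_RInt_of_continuous_pos).
  rewrite <- (RInt_Chasles (V := R_CompleteNormedModule) h x (1 / 2) y),
    <- (RInt_Chasles (V := R_CompleteNormedModule) h (1 / 2) 1 y) by (apply Hex; lra).
  assert (0 <= RInt h x (1 / 2)).
  { apply RInt_ge_0; [lra | apply Hex; lra | intros; left; apply Hpos; lra]. }
  assert (0 <= RInt h 1 y).
  { apply RInt_ge_0; [lra | apply Hex; lra | intros; left; apply Hpos; lra]. }
  change (RInt h (1 / 2) 1 <= RInt h x (1 / 2) + (RInt h (1 / 2) 1 + RInt h 1 y)). lra.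
Qed.

Lemma filterlim_squeeze_0 {T} {F : (T -> Prop) -> Prop} {FF : Filter F} (f g : T -> R) :
  F (fun t => 0 <= f t <= g t) -> filterlim g F (locally 0) -> filterlim f F (locally 0).
Proof. intros Hb Hg. apply (filterlim_le_le (fun _ => 0) f g 0 Hb (filterlim_const 0) Hg). Qed.

Lemma filterlim_increment_0 (Fa Fb : (R -> Prop) -> Prop) {FFa : Filter Fa} {FFb : Filter Fb}
  (B : R -> R) :
  filterlim B Fa (locally 0) -> filterlim B Fb (locally 0) ->
  filterlim (fun ab => B (snd ab) - B (fst ab)) (filter_prod Fa Fb) (locally 0).
Proof.
  intros Ha Hb. apply filterlim_locally. intros eps.
  assert (Heps2 : 0 < eps / 2) by (generalize (cond_pos eps); lra).
  set (e := mkposreal _ Heps2).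
  apply (Filter_prod _ _ _ (fun x => ball 0 e (B x)) (fun y => ball 0 e (B y)));
    [apply Ha, locally_ball | apply Hb, locally_ball |].
  intros x y Hx Hy. apply ball_Rabs. simpl.
  assert (Hx' : Rabs (B x - 0) < eps / 2) by exact Hx.
  assert (Hy' : Rabs (B y - 0) < eps / 2) by exact Hy.
  rewrite Rminus_0_r. apply (Rle_lt_trans _ _ _ (Rabs_sub_le_via 0 _ _)). lra.
Qed.

Lemma is_RInt_gen_derive_vanishing (B dB : R -> R) :
  (forall t, 0 < t -> is_derive B t (dB t)) -> (forall t, 0 < t -> continuous dB t) ->
  filterlim B (at_right 0) (locally 0) -> filterlim B at_infty (locally 0) ->
  is_RInt_gen dB (at_right 0) at_infty 0.
Proof.
  intros HB HdB H0 Hoo.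
  apply (is_RInt_gen_of_is_RInt dB _ _ (fun ab => B (snd ab) - B (fst ab)));
    [|exact (filterlim_increment_0 _ _ B H0 Hoo)].
  eapply filter_imp; [|apply eventually_pos]. intros [x y] [Hx Hy]; simpl.
  apply (is_RInt_derive (V := R_CompleteNormedModule) B dB); intros t Ht;
    assert (0 < t) by (generalize (Rmin_glb_lt x y 0 Hx Hy); lra); auto.
Qed.

(** * Domination by the Gamma kernel *)

Definition gamma_kernel a t := exp (- t) * Rpower t (a - 1).

Lemma gamma_kernel_pos a t : 0 < gamma_kernel a t.
Proof. apply Rmult_lt_0_compat; [apply exp_pos | apply Rpower_gt_0]. Qed.

Lemma continuous_gamma_kernel a t : 0 < t -> continuous (gamma_kernel a) t.
Proof.
  intros Ht. apply (ex_derive_continuous (K := R_AbsRing) (V := R_NormedModule)).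
  unfold gamma_kernel, Rpower. auto_derive. lra.
Qed.

(* [power_sigmoid a] has limits at [0] and [+oo], and its derivative dominates
   [gamma_kernel a] up to a constant factor: this is the comparison function for all the
   improper integrals below. *)
Definition power_sigmoid a t := Rpower t a / (1 + Rpower t a).

Lemma power_sigmoid_bounds a t : 0 <= power_sigmoid a t <= 1.
Proof.
  assert (Hu := Rpower_gt_0 t a). unfold power_sigmoid.
  split; [apply Rdiv_le_0_compat; lra|].
  apply (Rmult_le_reg_r (1 + Rpower t a)); [lra|].
  unfold Rdiv. rewrite Rmult_assoc, Rinv_l, Rmult_1_r; lra.
Qed.

Lemma is_derive_power_sigmoid a t : 0 < t ->
  is_derive (power_sigmoid a) t (a / t * (power_sigmoid a t * (1 - power_sigmoid a t))).
Proof.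
  intros Ht. assert (Hu := Rpower_gt_0 t a). unfold power_sigmoid.
  eapply is_derive_eq.
  - apply is_derive_div; [apply is_derive_Rpower, Ht | | lra].
    apply (is_derive_plus (fun _ => 1) (fun x => Rpower x a)); [apply is_derive_const|].
    apply is_derive_Rpower, Ht.
  - unfold plus, zero; simpl. rewrite Rpower_sub_1 by exact Ht. field. lra.
Qed.

Lemma power_sigmoid_at_right_0 a : 0 < a ->
  filterlim (power_sigmoid a) (at_right 0) (locally 0).
Proof.
  intros Ha. apply (filterlim_squeeze_0 _ (fun t => Rpower t a)); [|now apply Rpower_at_right_0].
  apply filter_forall. intros t. assert (Hu := Rpower_gt_0 t a).
  split; [apply power_sigmoid_bounds|]. unfold power_sigmoid.
  apply (Rmult_le_reg_r (1 + Rpower t a)); [lra|].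
  unfold Rdiv. rewrite Rmult_assoc, Rinv_l, Rmult_1_r; nra.
Qed.

Lemma power_sigmoid_at_infty a : 0 < a ->
  filterlim (power_sigmoid a) at_infty (locally 1).
Proof.
  intros Ha. apply filterlim_locally. intros eps.
  assert (Heps := cond_pos eps).
  eapply filter_imp; [|apply (Rpower_at_infty a Ha (fun u => / eps < u)); now exists (/ eps)].
  intros t Ht. apply ball_Rabs. assert (Hu := Rpower_gt_0 t a). unfold power_sigmoid.
  replace (Rpower t a / (1 + Rpower t a) - 1) with (- / (1 + Rpower t a)) by (field; lra).
  rewrite Rabs_Ropp, Rabs_pos_eq by (left; apply Rinv_0_lt_compat; lra).
  rewrite <- (Rinv_inv eps). apply Rinv_lt_contravar; [|lra].
  apply Rmult_lt_0_compat; [apply Rinv_0_lt_compat|]; lra.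
Qed.

Definition power_sigmoid_const a := 2 * (1 + Rpower (2 * a) (2 * a)).

(* [e^(-t) (1 + t^a)^2 <= 2 e^(-t) (1 + t^(2a))] and [t^(2a) e^(-t) <= (2a)^(2a)]. *)
Lemma exp_mul_Rpower_le a t : 0 < a -> 0 < t ->
  exp (- t) * Rpower t a
  <= power_sigmoid_const a * (power_sigmoid a t * (1 - power_sigmoid a t)).
Proof.
  intros Ha Ht. set (u := Rpower t a). assert (Hu : 0 < u) by apply Rpower_gt_0.
  assert (Hsq : Rpower t (2 * a) = u * u)
    by (unfold u; replace (2 * a) with (a + a) by ring; apply Rpower_plus).
  assert (Hmax := Rpower_mul_exp_le (2 * a) t ltac:(lra) Ht). rewrite Hsq in Hmax.
  assert (He : exp (- t) <= 1) by (rewrite <- exp_0; apply exp_le_compat; lra).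
  assert (Hb : exp (- (2 * a)) <= 1) by (rewrite <- exp_0; apply exp_le_compat; lra).
  assert (HB := Rpower_gt_0 (2 * a) (2 * a)).
  assert (Hexp := exp_pos (- t)).
  unfold power_sigmoid_const, power_sigmoid. fold u.
  replace (u / (1 + u) * (1 - u / (1 + u))) with (u / ((1 + u) * (1 + u))) by (field; lra).
  apply (Rmult_le_reg_r ((1 + u) * (1 + u))); [nra|].
  unfold Rdiv. rewrite (Rmult_assoc _ (u * _)), (Rmult_assoc u), Rinv_l, Rmult_1_r by nra.
  assert (Hcore : exp (- t) * ((1 + u) * (1 + u)) <= 2 * (1 + Rpower (2 * a) (2 * a))).
  { assert (0 <= exp (- t) * ((1 - u) * (1 - u))) by (apply Rmult_le_pos; [lra | apply Rle_0_sqr]).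
    assert (Rpower (2 * a) (2 * a) * exp (- (2 * a)) <= Rpower (2 * a) (2 * a)) by nra.
    nra. }
  nra.
Qed.

Lemma ex_RInt_gen_of_le_gamma_kernel (h : R -> R) a K : 0 < a -> 0 <= K ->
  (forall t, 0 < t -> continuous h t) ->
  (forall t, 0 < t -> 0 <= h t <= K * gamma_kernel a t) ->
  ex_RInt_gen h (at_right 0) at_infty.
Proof.
  intros Ha HK Hc Hb.
  set (c := K * power_sigmoid_const a / a).
  apply (ex_RInt_gen_dominated h
           (fun t => c * (a / t * (power_sigmoid a t * (1 - power_sigmoid a t))))
           (fun t => c * power_sigmoid a t)) with (la := c * 0) (lb := c * 1).
  - exact Hc.
  - intros t Ht. apply (ex_derive_continuous (K := R_AbsRing) (V := R_NormedModule)).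
    assert (HP : ex_derive (power_sigmoid a) t) by (eexists; now apply is_derive_power_sigmoid).
    auto_derive. repeat split; auto; lra.
  - intros t Ht. now apply is_derive_scal, is_derive_power_sigmoid.
  - intros t Ht. split; [apply Hb, Ht|].
    apply (Rle_trans _ _ _ (proj2 (Hb t Ht))).
    unfold gamma_kernel. rewrite Rpower_sub_1 by exact Ht.
    assert (Hkey := exp_mul_Rpower_le a t Ha Ht).
    apply (Rmult_le_compat_l K) in Hkey; [|exact HK].
    apply (Rmult_le_compat_r (/ t)) in Hkey; [|left; apply Rinv_0_lt_compat, Ht].
    replace (K * (exp (- t) * (Rpower t a / t))) with (K * (exp (- t) * Rpower t a) * / t)
      by (field; lra).
    apply (Rle_trans _ _ _ Hkey). right. unfold c. field. lra.
  - apply (filterlim_comp _ _ _ (power_sigmoid a) (Rmult c) _ (locally 0));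
      [now apply power_sigmoid_at_right_0
      | apply (filterlim_scal_r (K := R_AbsRing) (V := R_NormedModule))].
  - apply (filterlim_comp _ _ _ (power_sigmoid a) (Rmult c) _ (locally 1));
      [now apply power_sigmoid_at_infty
      | apply (filterlim_scal_r (K := R_AbsRing) (V := R_NormedModule))].
Qed.

Lemma filterlim_0_of_le_gamma_kernel (B : R -> R) a K : 1 < a -> 0 <= K ->
  (forall t, 0 < t -> 0 <= B t <= K * gamma_kernel a t) ->
  filterlim B (at_right 0) (locally 0) /\ filterlim B at_infty (locally 0).
Proof.
  intros Ha HK Hb.
  set (phi := fun x => K * (power_sigmoid_const (a - 1) * (x * (1 - x)))).
  assert (Hphi : forall x, continuous phi x).
  { intros x. apply (ex_derive_continuous (K := R_AbsRing) (V := R_NormedModule)).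
    unfold phi. auto_derive. exact I. }
  assert (Hdom : forall t, 0 < t -> 0 <= B t <= phi (power_sigmoid (a - 1) t)).
  { intros t Ht. split; [apply Hb, Ht|]. apply (Rle_trans _ _ _ (proj2 (Hb t Ht))).
    apply Rmult_le_compat_l; [exact HK|]. apply exp_mul_Rpower_le; lra. }
  split; apply (filterlim_squeeze_0 _ (fun t => phi (power_sigmoid (a - 1) t))).
  - exists (mkposreal 1 Rlt_0_1). intros t _ Ht. now apply Hdom.
  - assert (Hlim := filterlim_comp _ _ _ (power_sigmoid (a - 1)) phi _ _ _
                      (power_sigmoid_at_right_0 (a - 1) ltac:(lra)) (Hphi 0)).
    now replace (phi 0) with 0 in Hlim by (unfold phi; ring).
  - exists 0. intros t Ht. now apply Hdom.
  - assert (Hlim := filterlim_comp _ _ _ (power_sigmoid (a - 1)) phi _ _ _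
                      (power_sigmoid_at_infty (a - 1) ltac:(lra)) (Hphi 1)).
    now replace (phi 1) with 0 in Hlim by (unfold phi; ring).
Qed.

Lemma Gamma_fn_pos a : 0 < a -> 0 < Gamma_fn a.
Proof.
  intros Ha.
  assert (Hex : ex_RInt_gen (gamma_kernel a) (at_right 0) at_infty).
  { apply (ex_RInt_gen_of_le_gamma_kernel _ a 1); [lra | lra | apply continuous_gamma_kernel |].
    intros t _. rewrite Rmult_1_l. split; [left; apply gamma_kernel_pos | apply Rle_refl]. }
  apply (is_RInt_gen_pos (gamma_kernel a));
    [apply continuous_gamma_kernel | intros; apply gamma_kernel_pos |].
  exact (RInt_gen_correct (V := R_CompleteNormedModule) _ Hex).
Qed.

(** * The Hermite integrals *)

Definition herm_kernel a z t := exp (- t ^ 2 - 2 * t * z) * Rpower t (a - 1).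

Definition herm_int a z := RInt_gen (herm_kernel a z) (at_right 0) at_infty.

Lemma hermite_negE a z : hermite_neg a z = / Gamma_fn a * herm_int a z.
Proof. reflexivity. Qed.

Lemma herm_kernel_pos a z t : 0 < herm_kernel a z t.
Proof. apply Rmult_lt_0_compat; [apply exp_pos | apply Rpower_gt_0]. Qed.

Lemma continuous_herm_kernel a z t : 0 < t -> continuous (herm_kernel a z) t.
Proof.
  intros Ht. apply (ex_derive_continuous (K := R_AbsRing) (V := R_NormedModule)).
  unfold herm_kernel, Rpower. auto_derive. lra.
Qed.

Lemma herm_kernel_le_gamma_kernel a z t :
  herm_kernel a z t <= exp ((1 - 2 * z) ^ 2 / 4) * gamma_kernel a t.
Proof.
  unfold herm_kernel, gamma_kernel. rewrite <- Rmult_assoc, <- exp_plus.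
  apply Rmult_le_compat_r; [left; apply Rpower_gt_0|]. apply exp_le_compat.
  assert (0 <= (t - (1 - 2 * z) / 2) ^ 2) by apply pow2_ge_0. nra.
Qed.

Lemma is_RInt_gen_herm_int a z : 0 < a ->
  is_RInt_gen (herm_kernel a z) (at_right 0) at_infty (herm_int a z).
Proof.
  intros Ha. apply (RInt_gen_correct (V := R_CompleteNormedModule)).
  apply (ex_RInt_gen_of_le_gamma_kernel _ a (exp ((1 - 2 * z) ^ 2 / 4)));
    [lra | left; apply exp_pos | apply continuous_herm_kernel |].
  intros t _. split; [left; apply herm_kernel_pos | apply herm_kernel_le_gamma_kernel].
Qed.

Lemma herm_int_pos a z : 0 < a -> 0 < herm_int a z.
Proof.
  intros Ha. apply (is_RInt_gen_pos (herm_kernel a z));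
    [apply continuous_herm_kernel | intros; apply herm_kernel_pos | now apply is_RInt_gen_herm_int].
Qed.

Lemma herm_kernel_succ a z t : 0 < t -> herm_kernel (a + 1) z t = t * herm_kernel a z t.
Proof.
  intros Ht. unfold herm_kernel. replace (a + 1 - 1) with (1 + (a - 1)) by ring.
  rewrite Rpower_plus, Rpower_1 by exact Ht. ring.
Qed.

Lemma herm_kernel_add_z a z h t : herm_kernel a (z + h) t = exp (-2 * t * h) * herm_kernel a z t.
Proof.
  unfold herm_kernel.
  replace (- t ^ 2 - 2 * t * (z + h)) with (-2 * t * h + (- t ^ 2 - 2 * t * z)) by ring.
  rewrite exp_plus. ring.
Qed.

Lemma herm_kernel_shift a z t : 0 < t ->
  herm_kernel (a + 2) (z - 1) t = t ^ 2 * exp (2 * t) * herm_kernel a z t.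
Proof.
  intros Ht. replace (a + 2) with (a + 1 + 1) by ring. replace (z - 1) with (z + -1) by ring.
  rewrite herm_kernel_add_z, !herm_kernel_succ by exact Ht.
  replace (-2 * t * -1) with (2 * t) by ring. ring.
Qed.

(* The second-order Taylor remainder of [exp (-2 t h)] is at most [4 t^2 h^2 e^(2t)],
   which turns the kernel at [(a, z)] into the kernel at [(a + 2, z - 1)]. *)
Lemma herm_kernel_remainder_le a z h t : 0 < t -> Rabs h <= 1 ->
  Rabs (herm_kernel a (z + h) t - herm_kernel a z t - h * (-2 * herm_kernel (a + 1) z t))
  <= 4 * h ^ 2 * herm_kernel (a + 2) (z - 1) t.
Proof.
  intros Ht Hh.
  rewrite herm_kernel_add_z, herm_kernel_succ, herm_kernel_shift by exact Ht.
  assert (Hk := herm_kernel_pos a z t).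
  replace (exp (-2 * t * h) * herm_kernel a z t - herm_kernel a z t
           - h * (-2 * (t * herm_kernel a z t)))
    with (herm_kernel a z t * (exp (-2 * t * h) - 1 - (-2 * t * h))) by ring.
  rewrite Rabs_mult, (Rabs_pos_eq (herm_kernel a z t)) by lra.
  assert (Habs : Rabs (-2 * t * h) <= 2 * t).
  { replace (-2 * t * h) with (- (2 * t * h)) by ring.
    rewrite Rabs_Ropp, Rabs_mult, (Rabs_pos_eq (2 * t)) by lra. nra. }
  assert (Hrem : Rabs (exp (-2 * t * h) - 1 - -2 * t * h) <= (-2 * t * h) ^ 2 * exp (2 * t)).
  { apply (Rle_trans _ _ _ (exp_sub_1_sub_le _)).
    apply Rmult_le_compat_l; [apply pow2_ge_0 | now apply exp_le_compat]. }
  apply (Rle_trans _ _ _ (Rmult_le_compat_l _ _ _ (Rlt_le _ _ Hk) Hrem)). right. ring.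
Qed.

Lemma herm_int_remainder a z h : 0 < a -> Rabs h <= 1 ->
  Rabs (herm_int a (z + h) - herm_int a z - h * (-2 * herm_int (a + 1) z))
  <= 4 * herm_int (a + 2) (z - 1) * h ^ 2.
Proof.
  intros Ha Hh. assert (Ha1 : 0 < a + 1) by lra. assert (Ha2 : 0 < a + 2) by lra.
  assert (Hdiff := is_RInt_gen_lin _ _ (at_right 0) at_infty _ _ 1 (-1)
                     (is_RInt_gen_herm_int a (z + h) Ha) (is_RInt_gen_herm_int a z Ha)).
  assert (Hrem := is_RInt_gen_lin _ _ (at_right 0) at_infty _ _ 1 (2 * h) Hdiff
                    (is_RInt_gen_herm_int (a + 1) z Ha1)).
  assert (Hbound := is_RInt_gen_scal (V := R_NormedModule) _ (4 * h ^ 2) _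
                      (is_RInt_gen_herm_int (a + 2) (z - 1) Ha2)).
  assert (Hle : filter_prod (at_right 0) at_infty (fun ab => fst ab <= snd ab)).
  { eapply filter_imp; [|apply (eventually_near_0_and_infty 1 1 Rlt_0_1)].
    intros ab [[_ H0] H1]. lra. }
  assert (Hdom : filter_prod (at_right 0) at_infty (fun ab => forall t, fst ab <= t <= snd ab ->
    Rabs (1 * (1 * herm_kernel a (z + h) t + -1 * herm_kernel a z t)
          + 2 * h * herm_kernel (a + 1) z t)
    <= 4 * h ^ 2 * herm_kernel (a + 2) (z - 1) t)).
  { eapply filter_imp; [|apply eventually_pos].
    intros [x y] [Hx Hy] t Ht. simpl in *.
    replace (1 * (1 * herm_kernel a (z + h) t + -1 * herm_kernel a z t)
             + 2 * h * herm_kernel (a + 1) z t)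
      with (herm_kernel a (z + h) t - herm_kernel a z t - h * (-2 * herm_kernel (a + 1) z t))
      by ring.
    apply herm_kernel_remainder_le; [lra | exact Hh]. }
  assert (Hnorm := RInt_gen_norm (V := R_CompleteNormedModule) _ _ _ _ Hle Hdom Hrem Hbound).
  replace (herm_int a (z + h) - herm_int a z - h * (-2 * herm_int (a + 1) z))
    with (1 * (1 * herm_int a (z + h) + -1 * herm_int a z) + 2 * h * herm_int (a + 1) z) by ring.
  replace (4 * herm_int (a + 2) (z - 1) * h ^ 2) with (4 * h ^ 2 * herm_int (a + 2) (z - 1))
    by ring.
  exact Hnorm.
Qed.

Lemma is_derive_herm_int a z : 0 < a -> is_derive (herm_int a) z (-2 * herm_int (a + 1) z).
Proof.
  intros Ha. apply (is_derive_of_remainder_le _ _ _ (4 * herm_int (a + 2) (z - 1))).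
  intros h Hh. now apply herm_int_remainder.
Qed.

Lemma Derive_herm_int a z : 0 < a -> Derive (herm_int a) z = -2 * herm_int (a + 1) z.
Proof. intros Ha. now apply is_derive_unique, is_derive_herm_int. Qed.

Lemma is_derive_herm_kernel_succ a z t : 0 < t ->
  is_derive (herm_kernel (a + 1) z) t
    (1 * (a * herm_kernel a z t + -2 * herm_kernel (a + 2) z t) + -2 * z * herm_kernel (a + 1) z t).
Proof.
  intros Ht.
  assert (Hexp : is_derive (fun u => exp (- u ^ 2 - 2 * u * z)) t
                   ((-2 * t - 2 * z) * exp (- t ^ 2 - 2 * t * z)))
    by (auto_derive; [exact I |];
        replace (- t ^ 2 - 2 * t * z) with (- (t * (t * 1)) + - (2 * t * z)) by ring; ring).
  assert (Hd := is_derive_mult _ _ t _ _ Hexp (is_derive_Rpower a t Ht) Rmult_comm).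
  apply (is_derive_ext (fun u => exp (- u ^ 2 - 2 * u * z) * Rpower u a)).
  { intros u. unfold herm_kernel. now replace (a + 1 - 1) with a by ring. }
  apply (is_derive_eq _ _ _ _ Hd).
  replace (a + 2) with (a + 1 + 1) by ring. rewrite !herm_kernel_succ by exact Ht.
  unfold herm_kernel, plus, mult; simpl. rewrite (Rpower_sub_1 t a) by exact Ht. field. lra.
Qed.

(* Integration by parts against [t^a e^(-t^2 - 2tz)], which vanishes at both ends. *)
Lemma herm_int_rec a z : 0 < a ->
  a * herm_int a z = 2 * herm_int (a + 2) z + 2 * z * herm_int (a + 1) z.
Proof.
  intros Ha.
  assert (Hdom : forall t, 0 < t ->
    0 <= herm_kernel (a + 1) z t <= exp ((1 - 2 * z) ^ 2 / 4) * gamma_kernel (a + 1) t)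
    by (intros t _; split; [left; apply herm_kernel_pos | apply herm_kernel_le_gamma_kernel]).
  destruct (filterlim_0_of_le_gamma_kernel _ (a + 1) _ ltac:(lra) (Rlt_le _ _ (exp_pos _)) Hdom)
    as [H0 Hoo].
  assert (Hparts : is_RInt_gen (fun t => 1 * (a * herm_kernel a z t + -2 * herm_kernel (a + 2) z t)
                                         + -2 * z * herm_kernel (a + 1) z t)
                     (at_right 0) at_infty 0).
  { apply (is_RInt_gen_derive_vanishing (herm_kernel (a + 1) z));
      [apply is_derive_herm_kernel_succ | | exact H0 | exact Hoo].
    intros t Ht. apply (ex_derive_continuous (K := R_AbsRing) (V := R_NormedModule)).
    unfold herm_kernel, Rpower. auto_derive. repeat split; lra. }
  assert (Hlin := is_RInt_gen_lin _ _ (at_right 0) at_infty _ _ 1 (-2 * z)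
                    (is_RInt_gen_lin _ _ (at_right 0) at_infty _ _ a (-2)
                       (is_RInt_gen_herm_int a z Ha) (is_RInt_gen_herm_int (a + 2) z ltac:(lra)))
                    (is_RInt_gen_herm_int (a + 1) z ltac:(lra))).
  assert (E := eq_trans (eq_sym (is_RInt_gen_unique (V := R_CompleteNormedModule) _ _ Hparts))
                        (is_RInt_gen_unique (V := R_CompleteNormedModule) _ _ Hlin)).
  lra.
Qed.

(** * The ratios [x_a = f_(a+1) / f_a] *)

Definition herm_ratio a z := herm_int (a + 1) z / herm_int a z.

Lemma herm_ratio_pos a z : 0 < a -> 0 < herm_ratio a z.
Proof. intros Ha. apply Rdiv_lt_0_compat; apply herm_int_pos; lra. Qed.

Lemma herm_ratio_rec a z : 0 < a ->
  a = 2 * herm_ratio a z * herm_ratio (a + 1) z + 2 * z * herm_ratio a z.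
Proof.
  intros Ha. unfold herm_ratio. replace (a + 1 + 1) with (a + 2) by ring.
  assert (H0 := herm_int_pos a z Ha). assert (H1 := herm_int_pos (a + 1) z ltac:(lra)).
  apply (Rmult_eq_reg_r (herm_int a z)); [|lra].
  rewrite herm_int_rec at 1 by exact Ha. field. lra.
Qed.

Lemma is_derive_herm_ratio a z : 0 < a ->
  is_derive (herm_ratio a) z (- a + 2 * z * herm_ratio a z + 2 * herm_ratio a z ^ 2).
Proof.
  intros Ha. assert (H0 := herm_int_pos a z Ha). assert (H1 := herm_int_pos (a + 1) z ltac:(lra)).
  eapply is_derive_eq.
  - apply is_derive_div; [apply is_derive_herm_int; lra | apply is_derive_herm_int, Ha | lra].
  - assert (Hrec := herm_int_rec a z Ha). replace (a + 1 + 1) with (a + 2) by ring.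
    unfold herm_ratio.
    replace (herm_int (a + 2) z) with ((a * herm_int a z - 2 * z * herm_int (a + 1) z) / 2) by lra.
    field. lra.
Qed.

Lemma herm_ratio_le a z : 0 < a -> 0 < z -> 2 * z * herm_ratio a z <= a.
Proof.
  intros Ha Hz. assert (Hrec := herm_ratio_rec a z Ha).
  assert (H0 := herm_ratio_pos a z Ha). assert (H1 := herm_ratio_pos (a + 1) z ltac:(lra)). nra.
Qed.

Lemma herm_ratio_ge a z : 0 < a -> 0 < z -> a * z <= (2 * z ^ 2 + a + 1) * herm_ratio a z.
Proof.
  intros Ha Hz. assert (Hrec := herm_ratio_rec a z Ha).
  assert (H0 := herm_ratio_pos a z Ha). assert (H1 := herm_ratio_le (a + 1) z ltac:(lra) Hz). nra.
Qed.

Lemma herm_ratio_mul_succ_le a z : 0 < a -> 0 < z ->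
  4 * z ^ 2 * (herm_ratio a z * herm_ratio (a + 1) z) <= a * (a + 1).
Proof.
  intros Ha Hz.
  assert (H0 := herm_ratio_le a z Ha Hz). assert (H1 := herm_ratio_le (a + 1) z ltac:(lra) Hz).
  assert (P0 := herm_ratio_pos a z Ha). assert (P1 := herm_ratio_pos (a + 1) z ltac:(lra)).
  replace (4 * z ^ 2 * (herm_ratio a z * herm_ratio (a + 1) z))
    with ((2 * z * herm_ratio a z) * (2 * z * herm_ratio (a + 1) z)) by ring.
  apply Rmult_le_compat; nra.
Qed.

(* Multiply [herm_ratio_ge] at [a] and [a + 1], then use
   [(w + a + 1) (w + a + 2) (w - (2a + 3)) <= w^3] with [w = 2 z^2]. *)
Lemma herm_ratio_mul_succ_ge a z : 0 < a -> 0 < z ->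
  a * (a + 1) * (2 * z ^ 2 - (2 * a + 3)) <= 8 * z ^ 4 * (herm_ratio a z * herm_ratio (a + 1) z).
Proof.
  intros Ha Hz. set (w := 2 * z ^ 2). set (xx := herm_ratio a z * herm_ratio (a + 1) z).
  assert (Hw : 0 < w) by (unfold w; nra).
  assert (Hxx : 0 < xx) by (apply Rmult_lt_0_compat; apply herm_ratio_pos; lra).
  destruct (Rle_lt_dec w (2 * a + 3)) as [Hsmall|Hlarge].
  - apply Rle_trans with 0.
    + rewrite <- (Rmult_0_r (a * (a + 1))). apply Rmult_le_compat_l; nra.
    + assert (0 < z ^ 4) by (apply pow_lt; lra). nra.
  - assert (Hprod : a * (a + 1) * z ^ 2 <= (w + a + 1) * (w + a + 2) * xx).
    { assert (G0 := herm_ratio_ge a z Ha Hz). assert (G1 := herm_ratio_ge (a + 1) z ltac:(lra) Hz).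
      unfold xx, w.
      replace ((2 * z ^ 2 + a + 1) * (2 * z ^ 2 + a + 2) * (herm_ratio a z * herm_ratio (a + 1) z))
        with (((2 * z ^ 2 + a + 1) * herm_ratio a z)
              * ((2 * z ^ 2 + (a + 1) + 1) * herm_ratio (a + 1) z))
        by ring.
      replace (a * (a + 1) * z ^ 2) with ((a * z) * ((a + 1) * z)) by ring.
      apply Rmult_le_compat; nra. }
    assert (Hcubic : (w + a + 1) * (w + a + 2) * (w - (2 * a + 3)) <= w ^ 3) by nra.
    assert (Hden : 0 < (w + a + 1) * (w + a + 2)) by nra.
    apply (Rmult_le_reg_l ((w + a + 1) * (w + a + 2))); [exact Hden|].
    replace (8 * z ^ 4) with (2 * w ^ 2) by (unfold w; ring).
    replace (w ^ 3) with (2 * w ^ 2 * z ^ 2) in Hcubic by (unfold w; ring).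
    nra.
Qed.

Definition herm_ratio_gap p c z :=
  2 * herm_ratio (p + c) z - herm_ratio p z - herm_ratio (p + 2 * c) z.

Lemma herm_ratio_gap_eq p c z : 0 < p -> 0 < c ->
  z * herm_ratio_gap p c z =
  herm_ratio p z * herm_ratio (p + 1) z + herm_ratio (p + 2 * c) z * herm_ratio (p + 2 * c + 1) z
  - 2 * (herm_ratio (p + c) z * herm_ratio (p + c + 1) z).
Proof.
  intros Hp Hc. unfold herm_ratio_gap.
  assert (Rp := herm_ratio_rec p z Hp). assert (Rq := herm_ratio_rec (p + c) z ltac:(lra)).
  assert (Rs := herm_ratio_rec (p + 2 * c) z ltac:(lra)). lra.
Qed.

(* With [D = herm_ratio_gap p c Z], [herm_ratio_gap_eq] and the bounds on [x_b x_(b+1)]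
   give [8 Z^4 (Z D) >= 4 c^2 Z^2 - S]: the second difference of [b (b + 1)] with step [c] is
   [2 c^2]. *)
Lemma herm_ratio_gap_eventually_pos p c z0 : 0 < p -> 0 < c ->
  exists Z, z0 <= Z /\ 0 < herm_ratio_gap p c Z.
Proof.
  intros Hp Hc. set (q := p + c). set (s := p + 2 * c).
  set (S := p * (p + 1) * (2 * p + 3) + s * (s + 1) * (2 * s + 3)).
  assert (HS : 0 < S) by (unfold S, s; nra).
  assert (Hc2 : 0 < c ^ 2) by (apply pow_lt, Hc).
  set (Z := Rmax z0 1 + S / c ^ 2). exists Z.
  assert (HSc : 0 < S / c ^ 2) by (apply Rdiv_lt_0_compat; lra).
  assert (HZ1 : S / c ^ 2 + 1 <= Z) by (generalize (Rmax_r z0 1); unfold Z; lra).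
  split; [generalize (Rmax_l z0 1); unfold Z; lra|].
  assert (HZS : S < 4 * c ^ 2 * Z ^ 2).
  { assert (HSeq : S = c ^ 2 * (S / c ^ 2)) by (field; lra).
    assert (S < c ^ 2 * Z) by (rewrite HSeq at 1; apply Rmult_lt_compat_l; lra).
    assert (Z <= Z ^ 2) by nra.
    nra. }
  assert (HZ : 0 < Z) by lra.
  assert (Lp := herm_ratio_mul_succ_ge p Z Hp HZ).
  assert (Ls := herm_ratio_mul_succ_ge s Z ltac:(unfold s; lra) HZ).
  assert (Uq := herm_ratio_mul_succ_le q Z ltac:(unfold q; lra) HZ).
  assert (E := herm_ratio_gap_eq p c Z Hp Hc). fold q s in E.
  assert (Hsum : 0 < 8 * Z ^ 4 * (Z * herm_ratio_gap p c Z)).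
  { rewrite E.
    assert (Uq' : 4 * Z ^ 2 * (4 * Z ^ 2 * (herm_ratio q Z * herm_ratio (q + 1) Z))
                  <= 4 * Z ^ 2 * (q * (q + 1))) by (apply Rmult_le_compat_l; nra).
    assert (Hid : p * (p + 1) * (2 * Z ^ 2 - (2 * p + 3)) + s * (s + 1) * (2 * Z ^ 2 - (2 * s + 3))
                  - 4 * Z ^ 2 * (q * (q + 1)) = 4 * c ^ 2 * Z ^ 2 - S) by (unfold S, q, s; ring).
    lra. }
  assert (0 < Z ^ 5) by (apply pow_lt, HZ).
  replace (8 * Z ^ 4 * (Z * herm_ratio_gap p c Z)) with (8 * Z ^ 5 * herm_ratio_gap p c Z) in Hsum
    by ring.
  nra.
Qed.

Lemma Derive_herm_ratio a z : 0 < a ->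
  Derive (herm_ratio a) z = - a + 2 * z * herm_ratio a z + 2 * herm_ratio a z ^ 2.
Proof. intros Ha. now apply is_derive_unique, is_derive_herm_ratio. Qed.

(* [D' = m D - (x_p - x_(p+2c))^2] with [m] the derivative of
   [z^2 - (ln f_p + ln f_(p+2c)) / 2 - ln f_(p+c)]. *)
Lemma herm_ratio_gap_pos p c z : 0 < p -> 0 < c -> 0 < herm_ratio_gap p c z.
Proof.
  intros Hp Hc.
  set (dx := fun b z => - b + 2 * z * herm_ratio b z + 2 * herm_ratio b z ^ 2).
  set (m := fun z => 2 * z + herm_ratio p z + herm_ratio (p + 2 * c) z + 2 * herm_ratio (p + c) z).
  apply (pos_of_derive_le_mul (herm_ratio_gap p c)
           (fun z => 2 * dx (p + c) z - dx p z - dx (p + 2 * c) z)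
           (fun z => z ^ 2 - (ln (herm_int p z) + ln (herm_int (p + 2 * c) z)) / 2
                     - ln (herm_int (p + c) z)) m).
  - intros w. unfold herm_ratio_gap.
    auto_derive; [repeat split; eexists; apply is_derive_herm_ratio; lra|].
    rewrite !Derive_herm_ratio by lra. unfold dx. ring.
  - intros w.
    auto_derive;
      [repeat split; try (eexists; apply is_derive_herm_int); try apply herm_int_pos; lra|].
    rewrite !Derive_herm_int by lra.
    assert (H0 := herm_int_pos p w Hp). assert (H1 := herm_int_pos (p + c) w ltac:(lra)).
    assert (H2 := herm_int_pos (p + 2 * c) w ltac:(lra)).
    unfold m, herm_ratio. field. lra.
  - intros w.
    assert (E : 2 * dx (p + c) w - dx p w - dx (p + 2 * c) w
                = m w * herm_ratio_gap p c w - (herm_ratio p w - herm_ratio (p + 2 * c) w) ^ 2)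
      by (unfold dx, m, herm_ratio_gap; ring).
    rewrite E. assert (0 <= (herm_ratio p w - herm_ratio (p + 2 * c) w) ^ 2) by apply pow2_ge_0.
    lra.
  - intros w. now apply herm_ratio_gap_eventually_pos.
Qed.

Lemma herm_int_turan_ratio_decreasing p c x y : 0 < p -> 0 < c -> x < y ->
  herm_int (p + c) y ^ 2 / (herm_int p y * herm_int (p + 2 * c) y)
  < herm_int (p + c) x ^ 2 / (herm_int p x * herm_int (p + 2 * c) x).
Proof.
  intros Hp Hc Hxy.
  set (L := fun z => 2 * ln (herm_int (p + c) z) - ln (herm_int p z) - ln (herm_int (p + 2 * c) z)).
  assert (HL : forall z,
    herm_int (p + c) z ^ 2 / (herm_int p z * herm_int (p + 2 * c) z) = exp (L z))
    by (intros z; apply exp_two_ln_sub_ln_sub_ln; apply herm_int_pos; lra).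
  rewrite !HL. apply exp_increasing.
  apply (is_derive_neg_decreasing L (fun z => -2 * herm_ratio_gap p c z)); [|intros z | exact Hxy].
  - intros z. unfold L.
    auto_derive;
      [repeat split; try (eexists; apply is_derive_herm_int); try apply herm_int_pos; lra|].
    rewrite !Derive_herm_int by lra.
    assert (H0 := herm_int_pos p z Hp). assert (H1 := herm_int_pos (p + c) z ltac:(lra)).
    assert (H2 := herm_int_pos (p + 2 * c) z ltac:(lra)).
    unfold herm_ratio_gap, herm_ratio. field. lra.
  - assert (Hgap := herm_ratio_gap_pos p c z Hp Hc). lra.
Qed.

Theorem corollary9 (nu c : R) (hnu : 0 < nu) (hc : 0 < c) :
  forall x y : R, x < y ->
    (hermite_neg (nu + c) y) ^ 2 / (hermite_neg nu y * hermite_neg (nu + 2 * c) y)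
    < (hermite_neg (nu + c) x) ^ 2 / (hermite_neg nu x * hermite_neg (nu + 2 * c) x).
Proof.
  intros x y Hxy.
  assert (G0 := Gamma_fn_pos nu hnu). assert (G1 := Gamma_fn_pos (nu + c) ltac:(lra)).
  assert (G2 := Gamma_fn_pos (nu + 2 * c) ltac:(lra)).
  set (K := Gamma_fn nu * Gamma_fn (nu + 2 * c) / Gamma_fn (nu + c) ^ 2).
  assert (HK : 0 < K) by (apply Rdiv_lt_0_compat; [apply Rmult_lt_0_compat | apply pow_lt]; lra).
  assert (Hscale : forall z,
    hermite_neg (nu + c) z ^ 2 / (hermite_neg nu z * hermite_neg (nu + 2 * c) z)
    = K * (herm_int (nu + c) z ^ 2 / (herm_int nu z * herm_int (nu + 2 * c) z))).
  { intros z. rewrite !hermite_negE. unfold K.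
    assert (P0 := herm_int_pos nu z hnu). assert (P1 := herm_int_pos (nu + c) z ltac:(lra)).
    assert (P2 := herm_int_pos (nu + 2 * c) z ltac:(lra)).
    field. repeat split; lra. }
  rewrite !Hscale. apply Rmult_lt_compat_l; [exact HK|].
  now apply herm_int_turan_ratio_decreasing.
Qed.
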